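(* Let $f:X\to Y$ be an open, $SC^*$-irresolute bijection between topological spaces. If $I\subseteq Y$ is $gSC^*$-closed, then $f^{-1}(I)$ is $gSC^*$-closed in $X$.
   Context: For $A\subseteq Z$ in a topological space $Z$: $A$ is semi-open if $A\subseteq cl(int(A))$, semi-closed if its complement is semi-open; $scl(A)$ is the smallest semi-closed set containing $A$. $A$ is $c^*$-open if $int(cl(A))\subseteq A\subseteq cl(int(A))$. $A$ is $SC^*$-closed if $scl(A)\subseteq U$ whenever $A\subseteq U$ and $U$ is $c^*$-open; $A$ is $SC^*$-open if $Z\setminus A$ is $SC^*$-closed. $SC^*\text{-}cl(A)$ is the intersection of all $SC^*$-closed sets containing $A$. $A$ is $gSC^*$-closed if $SC^*\text{-}cl(A)\subseteq U$ whenever $A\subseteq U$ and $U$ is open. $f$ is $SC^*$-irresolute if $f^{-1}(N)$ is $SC^*$-open in $X$ for every $SC^*$-open $N\subseteq Y$. *)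

From HB Require Import structures.
From mathcomp Require Import all_boot all_order.
From mathcomp Require Import all_classical all_reals.
From mathcomp Require Import topology.
Set Implicit Arguments. Unset Strict Implicit. Unset Printing Implicit Defensive.
Local Open Scope classical_set_scope.

Section SCstar.
Context {Z : topologicalType}.

Definition semi_open (A : set Z) : Prop := A `<=` closure (interior A).
Definition semi_closed (A : set Z) : Prop := semi_open (~` A).
Definition scl (A : set Z) : set Z :=
  \bigcap_(F in [set F | semi_closed F /\ A `<=` F]) F.
Definition cstar_open (A : set Z) : Prop :=
  interior (closure A) `<=` A /\ A `<=` closure (interior A).
Definition SCstar_closed (A : set Z) : Prop :=
  forall U : set Z, A `<=` U -> cstar_open U -> scl A `<=` U.
Definition SCstar_open (A : set Z) : Prop := SCstar_closed (~` A).
Definition SCstar_cl (A : set Z) : set Z :=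
  \bigcap_(F in [set F | SCstar_closed F /\ A `<=` F]) F.
Definition gSCstar_closed (A : set Z) : Prop :=
  forall U : set Z, A `<=` U -> open U -> SCstar_cl A `<=` U.
End SCstar.

Definition SCstar_irresolute {X Y : topologicalType} (f : X -> Y) : Prop :=
  forall N : set Y, SCstar_open N -> SCstar_open (f @^-1` N).

Definition open_map {X Y : topologicalType} (f : X -> Y) : Prop :=
  forall U : set X, open U -> open (f @` U).

From mathcomp Require Import all_boot all_classical all_reals topology.
Local Open Scope classical_set_scope.

(* If f^-1(I) lies in an open U, then I lies in the open set f(U), so SC*-cl(I)
   does too.  Irresoluteness makes f^-1(SC*-cl I) an SC*-closed superset of
   f^-1(I), hence SC*-cl(f^-1 I) lies in f^-1(f(U)), which is U by injectivity. *)

Section SCstar_irresolute.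
Context {X Y : topologicalType} {f : X -> Y}.
Hypothesis firr : SCstar_irresolute f.

Lemma SCstar_closed_preimage (F : set Y) :
  SCstar_closed F -> SCstar_closed (f @^-1` F).
Proof.
move=> cF; have := firr (~` F); rewrite /SCstar_open setCK => /(_ cF).
by rewrite preimage_setC setCK.
Qed.

Lemma SCstar_cl_preimage (A : set Y) :
  SCstar_cl (f @^-1` A) `<=` f @^-1` SCstar_cl A.
Proof.
move=> x clx F [cF AF]; apply: (clx (f @^-1` F)); split.
- exact: SCstar_closed_preimage.
- exact: preimage_subset.
Qed.

End SCstar_irresolute.

Section bijection_images.
Context {X Y : Type} {f : X -> Y}.

Lemma can_image_preimage {g : Y -> X} (A : set Y) :
  cancel g f -> f @` (f @^-1` A) = A.
Proof. by move=> gK; apply: image_preimage; rewrite -subTset => y _; exists (g y). Qed.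

Lemma inj_preimage_image (A : set X) : injective f -> f @^-1` (f @` A) = A.
Proof.
move=> finj; apply/seteqP; split; last exact: preimage_image.
by move=> x [a Aa /finj <-].
Qed.

End bijection_images.

Theorem proposition4p10 (X Y : topologicalType) (f : X -> Y) :
  open_map f -> SCstar_irresolute f -> bijective f ->
  forall I : set Y, gSCstar_closed I -> gSCstar_closed (f @^-1` I).
Proof.
move=> fo firr [g fK gK] I hI U IU oU.
apply: subset_trans (SCstar_cl_preimage firr I) _.
rewrite -(inj_preimage_image U (can_inj fK)).
apply: preimage_subset; apply: hI; last exact: fo.
by rewrite -(can_image_preimage I gK); exact: image_subset.
Qed.
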